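(* Let $\widetilde\nabla$ be the canonical snm-connection on $\mathbb R^3$ determined by $\mathsf C=\partial_z$. There exist $\varepsilon>0$ and a function $f:[0,\varepsilon)\to\mathbb R$, smooth up to $0$, with $f'(0)=0$, such that the rotational surface about the $z$-axis generated by the graph $z=f(x)$, $0<x<\varepsilon$, namely $\{(x\cos t,x\sin t,f(x)):0<x<\varepsilon,\ t\in\mathbb R\}$, has constant sectional curvature $K\equiv\tfrac12$ with respect to $\widetilde\nabla$; in particular its closure meets the rotation axis orthogonally.
   Context: Let $\langle\cdot,\cdot\rangle$ be the Euclidean metric on $\mathbb R^3$ and $\widetilde\nabla^0$ its Levi-Civita connection (the ordinary directional derivative). Given a smooth vector field $\mathsf C$ on $\mathbb R^3$, the semi-symmetric non-metric connection (snm-connection) determined by $\mathsf C$ is $\widetilde\nabla_XY=\widetilde\nabla^0_XY+\langle \mathsf C,Y\rangle X$. Its curvature tensor is $\widetilde R(X,Y)Z=\widetilde\nabla_X\widetilde\nabla_YZ-\widetilde\nabla_Y\widetilde\nabla_XZ-\widetilde\nabla_{[X,Y]}Z$. For a surface $M$ immersed in $\mathbb R^3$, the induced connection is $\nabla_XY=(\widetilde\nabla_XY)^{\top}$ (tangential component), with curvature tensor $R$ defined by the same formula, and the sectional curvature of $M$ with respect to $\widetilde\nabla$ at $p$ is $K(p)=\frac12\big(\langle R(e_1,e_2)e_2,e_1\rangle+\langle R(e_2,e_1)e_1,e_2\rangle\big)$ for an orthonormal basis $\{e_1,e_2\}$ of $T_pM$. *)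

From Stdlib Require Import Reals.
From Coquelicot Require Import Coquelicot.
Open Scope R_scope.

Definition R3 := (R * R * R)%type.
Definition mkv (a b c : R) : R3 := (a, b, c).
Definition vx (v : R3) : R := fst (fst v).
Definition vy (v : R3) : R := snd (fst v).
Definition vz (v : R3) : R := snd v.
Definition vadd (v w : R3) : R3 := mkv (vx v + vx w) (vy v + vy w) (vz v + vz w).
Definition vscal (k : R) (v : R3) : R3 := mkv (k * vx v) (k * vy v) (k * vz v).
Definition dot (v w : R3) : R := vx v * vx w + vy v * vy w + vz v * vz w.

Definition sfield := R -> R -> R.
Definition vfield := R -> R -> R3.

Definition du (g : sfield) : sfield := fun u v => Derive (fun s => g s v) u.
Definition dv (g : sfield) : sfield := fun u v => Derive (fun s => g u s) v.
Definition Du (W : vfield) : vfield := fun u v =>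
  mkv (du (fun a b => vx (W a b)) u v) (du (fun a b => vy (W a b)) u v)
      (du (fun a b => vz (W a b)) u v).
Definition Dv (W : vfield) : vfield := fun u v =>
  mkv (dv (fun a b => vx (W a b)) u v) (dv (fun a b => vy (W a b)) u v)
      (dv (fun a b => vz (W a b)) u v).

(** Tangent vector fields of M, written in the coordinate frame
    (phi_u, phi_v): X = c1 X * phi_u + c2 X * phi_v. *)
Definition tfield := (sfield * sfield)%type.
Definition c1 (X : tfield) : sfield := fst X.
Definition c2 (X : tfield) : sfield := snd X.
Definition tsub (X Y : tfield) : tfield :=
  (fun u v => c1 X u v - c1 Y u v, fun u v => c2 X u v - c2 Y u v).

Section Surface.
Variable phi : R -> R -> R3.
Variable C : R3 -> R3.

Definition phiu : vfield := Du phi.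
Definition phiv : vfield := Dv phi.

Definition amb (X : tfield) : vfield := fun u v =>
  vadd (vscal (c1 X u v) (phiu u v)) (vscal (c2 X u v) (phiv u v)).

Definition act (X : tfield) (g : sfield) : sfield := fun u v =>
  c1 X u v * du g u v + c2 X u v * dv g u v.

Definition bracket (X Y : tfield) : tfield :=
  (fun u v => act X (c1 Y) u v - act Y (c1 X) u v,
   fun u v => act X (c2 Y) u v - act Y (c2 X) u v).

Definition nabla0 (X : tfield) (W : vfield) : vfield := fun u v =>
  vadd (vscal (c1 X u v) (Du W u v)) (vscal (c2 X u v) (Dv W u v)).

Definition nablaT (X : tfield) (W : vfield) : vfield := fun u v =>
  vadd (nabla0 X W u v) (vscal (dot (C (phi u v)) (W u v)) (amb X u v)).

Definition EE : sfield := fun u v => dot (phiu u v) (phiu u v).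
Definition FF : sfield := fun u v => dot (phiu u v) (phiv u v).
Definition GG : sfield := fun u v => dot (phiv u v) (phiv u v).
Definition DD : sfield := fun u v => EE u v * GG u v - FF u v * FF u v.

(** orthogonal projection onto the tangent plane, in coordinates *)
Definition tanproj (W : vfield) : tfield :=
  (fun u v => (GG u v * dot (W u v) (phiu u v) - FF u v * dot (W u v) (phiv u v))
              / DD u v,
   fun u v => (EE u v * dot (W u v) (phiv u v) - FF u v * dot (W u v) (phiu u v))
              / DD u v).

Definition nabla (X Y : tfield) : tfield := tanproj (nablaT X (amb Y)).

Definition curv (X Y Z : tfield) : tfield :=
  tsub (tsub (nabla X (nabla Y Z)) (nabla Y (nabla X Z))) (nabla (bracket X Y) Z).

(** the orthonormal frame obtained by Gram-Schmidt from (phi_u, phi_v) *)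
Definition e1 : tfield := (fun u v => / sqrt (EE u v), fun u v => 0).
Definition e2 : tfield :=
  (fun u v => - (FF u v / EE u v) / sqrt (DD u v / EE u v),
   fun u v => / sqrt (DD u v / EE u v)).

Definition sect_curv : sfield := fun u v =>
  / 2 * (dot (amb (curv e1 e2 e2) u v) (amb e1 u v)
         + dot (amb (curv e2 e1 e1) u v) (amb e2 u v)).
End Surface.

Definition dz_field : R3 -> R3 := fun _ => mkv 0 0 1.

Definition rot_surface (f : R -> R) : R -> R -> R3 :=
  fun x t => mkv (x * cos t) (x * sin t) (f x).

Definition smooth_on (f : R -> R) (a b : R) : Prop :=
  forall (n : nat) (x : R), a < x < b -> ex_derive (Derive_n f n) x.

(* For the profile z = f(x) with slope g = f', the orthonormal frame e1 = phi_x / |phi_x|,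
   e2 = phi_t / x and all its covariant derivatives have coordinates depending on x only,
   and a direct computation gives
     K = 1/2 + (g' (2g - x) - (1 + g^2) (g + x)) / (2 x (1 + g^2)^2).
   So K = 1/2 is the equation g' (2g - x) = (1 + g^2) (g + x).  It has a solution g = x h
   with h analytic at 0: h(0) = a0 = (1 + sqrt 3)/2 is forced by 2 a^2 - 2 a - 1 = 0, and
   W = h - a0 must satisfy
     2 sqrt 3 W + sqrt 3 x W' + 2 W^2 + 2 x W' W = x^2 h^2 (h + 1),
   whose n-th coefficient determines W_n through the factor (n + 2) sqrt 3.  Induction
   gives |W_n| <= 11^n / (20 n^2), so W converges for |x| < 1/11, and f is the primitive
   of g with f(0) = 0. *)

From Pilot Require Import Defs.
From Stdlib Require Import Reals Lra Psatz Lia Nsatz.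
From Coquelicot Require Import Coquelicot.
(* Re-imported so that the tangent-field coordinates [c1], [c2] are not shadowed. *)
Import Defs.
Open Scope R_scope.

Lemma cos_sin_sq v : cos v * cos v + sin v * sin v = 1.
Proof. pose proof (sin2_cos2 v). unfold Rsqr in *. lra. Qed.

(* The vector with components (A, B, Z) in the frame (radial, angular, vertical)
   of R^3 at angle v; the derivatives of a rotational surface stay in this frame. *)
Definition cyl (A B Z v : R) : R3 :=
  mkv (A * cos v - B * sin v) (A * sin v + B * cos v) Z.

Lemma mkv_ext a b c a' b' c' : a = a' -> b = b' -> c = c' -> mkv a b c = mkv a' b' c'.
Proof. intros -> -> ->; reflexivity. Qed.

Lemma vadd_cyl A B Z A' B' Z' v :
  vadd (cyl A B Z v) (cyl A' B' Z' v) = cyl (A + A') (B + B') (Z + Z') v.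
Proof. unfold vadd, cyl at 3; apply mkv_ext; unfold cyl, vx, vy, vz, mkv; simpl; ring. Qed.

Lemma vscal_cyl k A B Z v : vscal k (cyl A B Z v) = cyl (k * A) (k * B) (k * Z) v.
Proof. unfold vscal, cyl at 2; apply mkv_ext; unfold cyl, vx, vy, vz, mkv; simpl; ring. Qed.

Lemma dot_cyl A B Z A' B' Z' v :
  dot (cyl A B Z v) (cyl A' B' Z' v) = A * A' + B * B' + Z * Z'.
Proof.
  unfold cyl, dot, vx, vy, vz, mkv; simpl.
  rewrite <- (Rmult_1_r (A * A')), <- (Rmult_1_r (B * B')), <- (cos_sin_sq v). ring.
Qed.

Lemma dz_field_cyl p v : dz_field p = cyl 0 0 1 v.
Proof. unfold dz_field, cyl; apply mkv_ext; ring. Qed.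

(* [auto_derive] leaves the derivatives of abstract functions eta-expanded. *)
Lemma is_derive_unique_eta (F : R -> R) x l : is_derive F x l -> Derive (fun y => F y) x = l.
Proof. apply is_derive_unique. Qed.

Lemma is_derive_cst (c x : R) : is_derive (fun _ => c) x 0.
Proof. auto_derive; auto. Qed.

Lemma Du_cyl (A B Z : R -> R) u v a b z :
  is_derive A u a -> is_derive B u b -> is_derive Z u z ->
  Du (fun s t => cyl (A s) (B s) (Z s) t) u v = cyl a b z v.
Proof.
  intros HA HB HZ. unfold Du, du, cyl at 2; apply mkv_ext;
    unfold cyl, vx, vy, vz, mkv; simpl; apply is_derive_unique; auto_derive;
    try (repeat split; eexists; eassumption);
    rewrite ?(is_derive_unique_eta _ _ _ HA), ?(is_derive_unique_eta _ _ _ HB),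
      ?(is_derive_unique_eta _ _ _ HZ); ring.
Qed.

Lemma Dv_cyl (A B Z : R -> R) u v :
  Dv (fun s t => cyl (A s) (B s) (Z s) t) u v = cyl (- B u) (A u) 0 v.
Proof.
  unfold Dv, dv, cyl at 2; apply mkv_ext;
    unfold cyl, vx, vy, vz, mkv; simpl; apply is_derive_unique; auto_derive; auto; ring.
Qed.

Lemma Du_ext_loc (W W' : vfield) u v :
  locally u (fun s => W s v = W' s v) -> Du W u v = Du W' u v.
Proof.
  intros H. unfold Du, du. apply mkv_ext; apply Derive_ext_loc;
    apply (filter_imp _ _ (fun s Hs => f_equal _ Hs) H).
Qed.

Lemma Dv_ext (W W' : vfield) u v :
  (forall t, W u t = W' u t) -> Dv W u v = Dv W' u v.
Proof.
  intros H. unfold Dv, dv. apply mkv_ext; apply Derive_ext; intros t; rewrite H; reflexivity.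
Qed.

Lemma c1_tsub X Y u v : c1 (tsub X Y) u v = c1 X u v - c1 Y u v.
Proof. reflexivity. Qed.

Lemma c2_tsub X Y u v : c2 (tsub X Y) u v = c2 X u v - c2 Y u v.
Proof. reflexivity. Qed.

Lemma inv_derive s : 0 < s -> is_derive Rinv s (- / (s * s)).
Proof. intros Hs. auto_derive; [lra|]. field; lra. Qed.

Section RadialFields.

Variable eps : R.

Definition radial_on (Y : tfield) (F1 F2 : R -> R) : Prop :=
  forall s t, 0 < s < eps -> c1 Y s t = F1 s /\ c2 Y s t = F2 s.

Lemma strip_nbhd u : 0 < u < eps -> locally u (fun s => 0 < s < eps).
Proof. exact (open_and _ _ (open_gt 0) (open_lt eps) u). Qed.

Lemma du_radial Y F1 F2 s t d1 d2 :
  radial_on Y F1 F2 -> 0 < s < eps -> is_derive F1 s d1 -> is_derive F2 s d2 ->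
  du (c1 Y) s t = d1 /\ du (c2 Y) s t = d2.
Proof.
  intros HY Hs D1 D2. unfold du. split; apply is_derive_unique;
    [apply (is_derive_ext_loc F1) | apply (is_derive_ext_loc F2)]; auto;
    eapply filter_imp; try exact (strip_nbhd s Hs); intros s' Hs'; symmetry; apply HY, Hs'.
Qed.

Lemma dv_radial Y F1 F2 s t :
  radial_on Y F1 F2 -> 0 < s < eps -> dv (c1 Y) s t = 0 /\ dv (c2 Y) s t = 0.
Proof.
  intros HY Hs. unfold dv. split; apply is_derive_unique;
    [apply (is_derive_ext (fun _ => F1 s)) | apply (is_derive_ext (fun _ => F2 s))];
    try apply is_derive_cst; intros t'; symmetry; apply HY, Hs.
Qed.

Lemma bracket_radial X Y F1 F2 G1 G2 s t dF1 dF2 dG1 dG2 :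
  0 < s < eps -> radial_on X F1 F2 -> radial_on Y G1 G2 ->
  is_derive F1 s dF1 -> is_derive F2 s dF2 -> is_derive G1 s dG1 -> is_derive G2 s dG2 ->
  c1 (bracket X Y) s t = F1 s * dG1 - G1 s * dF1 /\
  c2 (bracket X Y) s t = F1 s * dG2 - G1 s * dF2.
Proof.
  intros Hs HX HY DF1 DF2 DG1 DG2. unfold bracket, act; simpl.
  destruct (HX s t Hs) as [-> ->], (HY s t Hs) as [-> ->].
  destruct (du_radial X F1 F2 s t _ _ HX Hs DF1 DF2) as [-> ->].
  destruct (du_radial Y G1 G2 s t _ _ HY Hs DG1 DG2) as [-> ->].
  destruct (dv_radial X F1 F2 s t HX Hs) as [-> ->].
  destruct (dv_radial Y G1 G2 s t HY Hs) as [-> ->].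
  split; ring.
Qed.

End RadialFields.

Section RotationalSurface.

Variable f : R -> R.
Notation g := (Derive f).
Notation phi := (rot_surface f).

Lemma phiu_rot u v : phiu phi u v = cyl 1 0 (g u) v.
Proof.
  unfold phiu, Du, du, cyl; apply mkv_ext;
    unfold rot_surface, vx, vy, vz, mkv; simpl; try reflexivity;
    apply is_derive_unique; auto_derive; auto; ring.
Qed.

Lemma phiv_rot u v : phiv phi u v = cyl 0 u 0 v.
Proof.
  unfold phiv, Dv, dv, cyl; apply mkv_ext;
    unfold rot_surface, vx, vy, vz, mkv; simpl;
    apply is_derive_unique; auto_derive; auto; ring.
Qed.

Lemma EE_rot u v : EE phi u v = 1 + g u * g u.
Proof. unfold EE; rewrite phiu_rot, dot_cyl; ring. Qed.

Lemma FF_rot u v : FF phi u v = 0.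
Proof. unfold FF; rewrite phiu_rot, phiv_rot, dot_cyl; ring. Qed.

Lemma GG_rot u v : GG phi u v = u * u.
Proof. unfold GG; rewrite phiv_rot, dot_cyl; ring. Qed.

Lemma amb_rot Y u v :
  amb phi Y u v = cyl (c1 Y u v) (u * c2 Y u v) (g u * c1 Y u v) v.
Proof.
  unfold amb; rewrite phiu_rot, phiv_rot, !vscal_cyl, vadd_cyl.
  unfold cyl; apply mkv_ext; ring.
Qed.

Lemma metric_pos u : 0 < 1 + g u * g u.
Proof. nra. Qed.

Lemma e1_rot u v : c1 (e1 phi) u v = / sqrt (1 + g u * g u) /\ c2 (e1 phi) u v = 0.
Proof. unfold e1; simpl; rewrite EE_rot; auto. Qed.

Lemma e2_rot u v : c1 (e2 phi) u v = 0 /\ c2 (e2 phi) u v = / Rabs u.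
Proof.
  unfold e2, DD; simpl. rewrite EE_rot, FF_rot, GG_rot. pose proof (metric_pos u).
  split; [unfold Rdiv; ring|].
  rewrite <- sqrt_Rsqr_abs. unfold Rsqr. do 2 f_equal. field. lra.
Qed.

Variable eps : R.
Local Notation radial_on := (radial_on eps).

Lemma nabla_radial X Y F1 F2 u v d1 d2 g1 :
  0 < u < eps -> radial_on Y F1 F2 ->
  is_derive F1 u d1 -> is_derive F2 u d2 -> is_derive g u g1 ->
  c1 (nabla phi dz_field X Y) u v =
    c1 X u v * (d1 + g u * F1 u * (1 + g1 / (1 + g u * g u)))
    - c2 X u v * u * F2 u / (1 + g u * g u) /\
  c2 (nabla phi dz_field X Y) u v =
    c1 X u v * (d2 + F2 u / u) + c2 X u v * F1 u * (/ u + g u).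
Proof.
  intros Hu HY D1 D2 Dg.
  assert (HW : forall s t, 0 < s < eps ->
    amb phi Y s t = cyl (F1 s) (s * F2 s) (g s * F1 s) t).
  { intros s t Hs. destruct (HY s t Hs) as [H1 H2]. rewrite amb_rot, H1, H2. reflexivity. }
  assert (HDu : Du (amb phi Y) u v = cyl d1 (u * d2 + F2 u) (g1 * F1 u + g u * d1) v).
  { rewrite (Du_ext_loc _ (fun s t => cyl (F1 s) (s * F2 s) (g s * F1 s) t)).
    - apply (Du_cyl F1 (fun s => s * F2 s) (fun s => g s * F1 s)); auto; auto_derive;
        try (repeat split; eexists; eassumption);
        rewrite ?(is_derive_unique_eta _ _ _ D1), ?(is_derive_unique_eta _ _ _ D2),
          ?(is_derive_unique_eta _ _ _ Dg); ring.
    - apply (filter_imp _ _ (fun s Hs => HW s v Hs) (strip_nbhd eps u Hu)). }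
  assert (HDv : Dv (amb phi Y) u v = cyl (- (u * F2 u)) (F1 u) 0 v).
  { rewrite (Dv_ext _ (fun s t => cyl (F1 s) (s * F2 s) (g s * F1 s) t))
      by (intros t; apply HW; exact Hu).
    exact (Dv_cyl F1 (fun s => s * F2 s) (fun s => g s * F1 s) u v). }
  pose proof (metric_pos u).
  unfold nabla, tanproj, DD, nablaT, nabla0; simpl.
  rewrite !EE_rot, !FF_rot, !GG_rot, HDu, HDv, HW, (dz_field_cyl _ v), !amb_rot,
    !phiu_rot, !phiv_rot, !vscal_cyl, !vadd_cyl, !dot_cyl by exact Hu.
  split; field; lra.
Qed.

Hypothesis g_derivable : forall s, 0 < s < eps -> ex_derive g s.

Let E (s : R) : R := 1 + g s * g s.
Let p (s : R) : R := / sqrt (E s).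

Lemma sqrt_E_pos s : 0 < sqrt (E s).
Proof. apply sqrt_lt_R0, metric_pos. Qed.

Lemma g_derive s : 0 < s < eps -> is_derive g s (Derive g s).
Proof. intros Hs. exact (Derive_correct _ _ (g_derivable s Hs)). Qed.

Lemma p_derive s : 0 < s < eps ->
  is_derive p s (- (g s * Derive g s) / (E s * sqrt (E s))).
Proof.
  intros Hs. pose proof (sqrt_E_pos s). pose proof (metric_pos s).
  pose proof (g_derivable s Hs). unfold p, E in *. auto_derive.
  - repeat split; auto; lra.
  - rewrite (is_derive_unique_eta _ _ _ (g_derive s Hs)), sqrt_sqrt by lra. field. lra.
Qed.

Lemma e1_radial : radial_on (e1 phi) p (fun _ => 0).
Proof. intros s t _. exact (e1_rot s t). Qed.

Lemma e2_radial : radial_on (e2 phi) (fun _ => 0) Rinv.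
Proof.
  intros s t Hs. destruct (e2_rot s t) as [-> ->]. rewrite Rabs_right by lra. auto.
Qed.

(* Replaces [sqrt (E s)] by a fresh [r] with [r * r = E s], so that identities
   involving the orthonormal frame become polynomial identities modulo this
   relation ([nsatz] only uses the equations below the last other hypothesis). *)
Ltac abstract_sqrt_E s :=
  pose proof (sqrt_E_pos s); pose proof (metric_pos s);
  pose proof (sqrt_sqrt _ (Rlt_le _ _ (metric_pos s)));
  unfold p, E in *; generalize dependent (sqrt (1 + g s * g s)); intros r **;
  match goal with H : r * r = _ |- _ => move H at bottom end.

Ltac field_mod_sqrt_E := field_simplify_eq; try solve [cbn [pow]; nsatz]; repeat split; lra.

Lemma nabla_e1_e1 :
  radial_on (nabla phi dz_field (e1 phi) (e1 phi)) (fun s => g s / E s) (fun _ => 0).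
Proof.
  intros s t Hs.
  destruct (nabla_radial (e1 phi) (e1 phi) _ _ s t _ _ _ Hs e1_radial
    (p_derive s Hs) (is_derive_cst 0 s) (g_derive s Hs)) as [-> ->].
  destruct (e1_rot s t) as [-> ->].
  abstract_sqrt_E s. split; field_mod_sqrt_E.
Qed.

Lemma nabla_e1_e2 :
  radial_on (nabla phi dz_field (e1 phi) (e2 phi)) (fun _ => 0) (fun _ => 0).
Proof.
  intros s t Hs.
  destruct (nabla_radial (e1 phi) (e2 phi) _ _ s t _ _ _ Hs e2_radial
    (is_derive_cst 0 s) (inv_derive s (proj1 Hs)) (g_derive s Hs)) as [-> ->].
  destruct (e1_rot s t) as [-> ->].
  abstract_sqrt_E s. split; field_mod_sqrt_E.
Qed.

Lemma nabla_e2_e2 :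
  radial_on (nabla phi dz_field (e2 phi) (e2 phi)) (fun s => - / (s * E s)) (fun _ => 0).
Proof.
  intros s t Hs.
  destruct (nabla_radial (e2 phi) (e2 phi) _ _ s t _ _ _ Hs e2_radial
    (is_derive_cst 0 s) (inv_derive s (proj1 Hs)) (g_derive s Hs)) as [-> ->].
  destruct (e2_radial s t Hs) as [-> ->].
  abstract_sqrt_E s. split; field_mod_sqrt_E.
Qed.

Lemma nabla_e2_e1 : radial_on (nabla phi dz_field (e2 phi) (e1 phi))
  (fun _ => 0) (fun s => p s / s * (/ s + g s)).
Proof.
  intros s t Hs.
  destruct (nabla_radial (e2 phi) (e1 phi) _ _ s t _ _ _ Hs e1_radial
    (p_derive s Hs) (is_derive_cst 0 s) (g_derive s Hs)) as [-> ->].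
  destruct (e2_radial s t Hs) as [-> ->].
  abstract_sqrt_E s. split; field_mod_sqrt_E.
Qed.

Lemma bracket_e1_e2 :
  radial_on (bracket (e1 phi) (e2 phi)) (fun _ => 0) (fun s => - p s / (s * s)).
Proof.
  intros s t Hs.
  destruct (bracket_radial eps _ _ _ _ _ _ s t _ _ _ _ Hs e1_radial e2_radial
    (p_derive s Hs) (is_derive_cst 0 s) (is_derive_cst 0 s) (inv_derive s (proj1 Hs)))
    as [-> ->].
  split; [ring | field; lra].
Qed.

Lemma bracket_e2_e1 :
  radial_on (bracket (e2 phi) (e1 phi)) (fun _ => 0) (fun s => p s / (s * s)).
Proof.
  intros s t Hs.
  destruct (bracket_radial eps _ _ _ _ _ _ s t _ _ _ _ Hs e2_radial e1_radial
    (is_derive_cst 0 s) (inv_derive s (proj1 Hs)) (p_derive s Hs) (is_derive_cst 0 s))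
    as [-> ->].
  split; [ring | field; lra].
Qed.

Lemma curv_e1_e2_e2 u v : 0 < u < eps ->
  dot (amb phi (curv phi dz_field (e1 phi) (e2 phi) (e2 phi)) u v) (amb phi (e1 phi) u v)
  = g u * (Derive g u - E u) / (u * E u * E u).
Proof.
  intros Hu. pose proof (g_derive u Hu) as Dg.
  assert (DA : is_derive (fun s => - / (s * E s)) u
                 ((E u + 2 * u * g u * Derive g u) / (u * E u) ^ 2)).
  { pose proof (metric_pos u). unfold E in *. auto_derive.
    - repeat split; try (exists (Derive g u); exact Dg).
      apply Rmult_integral_contrapositive; lra.
    - rewrite (is_derive_unique_eta _ _ _ Dg). field. lra. }
  rewrite !amb_rot, dot_cyl. unfold curv. rewrite !c1_tsub, !c2_tsub.
  destruct (nabla_radial (e1 phi) _ _ _ u v _ _ _ Hu nabla_e2_e2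
    DA (is_derive_cst 0 u) Dg) as [-> ->].
  destruct (nabla_radial (e2 phi) _ _ _ u v _ _ _ Hu nabla_e1_e2
    (is_derive_cst 0 u) (is_derive_cst 0 u) Dg) as [-> ->].
  destruct (nabla_radial (bracket (e1 phi) (e2 phi)) _ _ _ u v _ _ _ Hu e2_radial
    (is_derive_cst 0 u) (inv_derive u (proj1 Hu)) Dg) as [-> ->].
  destruct (e1_radial u v Hu) as [-> ->], (e2_radial u v Hu) as [-> ->],
    (bracket_e1_e2 u v Hu) as [-> ->].
  abstract_sqrt_E u. field_mod_sqrt_E.
Qed.

Lemma curv_e2_e1_e1 u v : 0 < u < eps ->
  dot (amb phi (curv phi dz_field (e2 phi) (e1 phi) (e1 phi)) u v) (amb phi (e2 phi) u v)
  = (g u * g u - Derive g u) / E u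
    + g u * Derive g u * (1 + u * g u) / (u * E u * E u).
Proof.
  intros Hu. pose proof (g_derive u Hu) as Dg. pose proof (metric_pos u).
  pose proof (sqrt_E_pos u). pose proof (p_derive u Hu) as Dp.
  assert (DB : is_derive (fun s => g s / E s) u
                 (Derive g u * (1 - g u * g u) / (E u * E u))).
  { unfold E in *. auto_derive.
    - repeat split; try (exists (Derive g u); exact Dg). lra.
    - rewrite (is_derive_unique_eta _ _ _ Dg). field. lra. }
  assert (DC : is_derive (fun s => p s / s * (/ s + g s)) u
    (- (g u * Derive g u) / (E u * sqrt (E u)) / u * (/ u + g u)
     - p u / (u * u) * (/ u + g u) + p u / u * (- / (u * u) + Derive g u))).
  { auto_derive.
    - repeat split; try (exists (Derive g u); exact Dg); try (eexists; exact Dp); lra.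
    - rewrite (is_derive_unique_eta _ _ _ Dg), (is_derive_unique_eta _ _ _ Dp).
      unfold p, E in *. field. lra. }
  rewrite !amb_rot, dot_cyl. unfold curv. rewrite !c1_tsub, !c2_tsub.
  destruct (nabla_radial (e2 phi) _ _ _ u v _ _ _ Hu nabla_e1_e1
    DB (is_derive_cst 0 u) Dg) as [-> ->].
  destruct (nabla_radial (e1 phi) _ _ _ u v _ _ _ Hu nabla_e2_e1
    (is_derive_cst 0 u) DC Dg) as [-> ->].
  destruct (nabla_radial (bracket (e2 phi) (e1 phi)) _ _ _ u v _ _ _ Hu e1_radial
    Dp (is_derive_cst 0 u) Dg) as [-> ->].
  destruct (e1_radial u v Hu) as [-> ->], (e2_radial u v Hu) as [-> ->],
    (bracket_e2_e1 u v Hu) as [-> ->].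
  abstract_sqrt_E u. field_mod_sqrt_E.
Qed.

Lemma sect_curv_rot u v : 0 < u < eps ->
  sect_curv phi dz_field u v
  = / 2 + (Derive g u * (2 * g u - u) - E u * (g u + u)) / (2 * u * E u * E u).
Proof.
  intros Hu. unfold sect_curv. rewrite curv_e1_e2_e2, curv_e2_e1_e1 by exact Hu.
  pose proof (metric_pos u). unfold E. field. lra.
Qed.

Lemma sect_curv_rot_half u v : 0 < u < eps ->
  Derive g u * (2 * g u - u) = (1 + g u * g u) * (g u + u) ->
  sect_curv phi dz_field u v = 1 / 2.
Proof.
  intros Hu Hode. rewrite sect_curv_rot by exact Hu. fold (E u) in Hode.
  rewrite Hode. field. pose proof (metric_pos u). unfold E. lra.
Qed.

End RotationalSurface.

Definition inv_sq (k : nat) : R := match k with O => 0 | _ => / (INR k * INR k) end.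

Lemma inv_sq_eq k : (0 < k)%nat -> inv_sq k = / (INR k * INR k).
Proof. destruct k; [lia | reflexivity]. Qed.

Lemma INR_ge_1 k : (0 < k)%nat -> 1 <= INR k.
Proof. intros Hk. apply (le_INR 1); lia. Qed.

Lemma inv_sq_nonneg k : 0 <= inv_sq k.
Proof.
  destruct k as [|k]; [simpl; lra|]. rewrite inv_sq_eq by lia.
  pose proof (INR_ge_1 (S k) ltac:(lia)). apply Rlt_le, Rinv_0_lt_compat. nra.
Qed.

Lemma INR_inv_sq_le_1 k : INR k * inv_sq k <= 1.
Proof.
  destruct k as [|k]; [simpl; lra|]. rewrite inv_sq_eq by lia.
  pose proof (INR_ge_1 (S k) ltac:(lia)). set (x := INR (S k)) in *.
  replace (x * / (x * x)) with (/ x) by (field; lra).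
  rewrite <- Rinv_1. apply Rinv_le_contravar; lra.
Qed.

Lemma inv_sq_le_1 k : inv_sq k <= 1.
Proof.
  destruct k as [|k]; [simpl; lra|].
  pose proof (INR_inv_sq_le_1 (S k)). pose proof (INR_ge_1 (S k) ltac:(lia)).
  pose proof (inv_sq_nonneg (S k)). nra.
Qed.

(* Telescoping against 1/(m+1)^2 <= 1/m - 1/(m+1). *)
Lemma sum_inv_sq_telescope n : sum_f_R0 inv_sq (S n) <= 2 - / INR (S n).
Proof.
  induction n as [|n IH]; [simpl; lra|].
  rewrite tech5, (inv_sq_eq (S (S n))) by lia.
  pose proof (INR_ge_1 (S n) ltac:(lia)).
  rewrite (S_INR (S n)) in *. set (y := INR (S n)) in *.
  assert (/ ((y + 1) * (y + 1)) <= / y - / (y + 1)).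
  { apply (Rmult_le_reg_r (y * (y + 1) * (y + 1))); [nra|].
    field_simplify; nra. }
  lra.
Qed.

Lemma sum_inv_sq_le_2 n : sum_f_R0 inv_sq n <= 2.
Proof.
  destruct n as [|n]; [simpl; lra|].
  pose proof (sum_inv_sq_telescope n). pose proof (INR_ge_1 (S n) ltac:(lia)).
  pose proof (Rinv_0_lt_compat (INR (S n)) ltac:(lra)). lra.
Qed.

Lemma inv_sq_mul_le n k : (k <= n)%nat ->
  inv_sq k * inv_sq (n - k) <= 2 * inv_sq n * (inv_sq k + inv_sq (n - k)) /\
  INR k * inv_sq k * inv_sq (n - k) <= 2 * INR n * inv_sq n * (inv_sq k + inv_sq (n - k)).
Proof.
  intros Hk. pose proof (inv_sq_nonneg n). pose proof (pos_INR n).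
  pose proof (inv_sq_nonneg k). pose proof (inv_sq_nonneg (n - k)).
  assert (0 <= 2 * inv_sq n * (inv_sq k + inv_sq (n - k))) by
    (repeat apply Rmult_le_pos; lra).
  assert (0 <= 2 * INR n * inv_sq n * (inv_sq k + inv_sq (n - k))) by
    (repeat apply Rmult_le_pos; lra).
  destruct (Nat.eq_dec k 0) as [->|Hk0].
  { change (inv_sq 0) with 0 in *. rewrite !Rmult_0_r, !Rmult_0_l. auto. }
  destruct (Nat.eq_dec k n) as [->|Hkn].
  { rewrite Nat.sub_diag in *. change (inv_sq 0) with 0 in *. rewrite !Rmult_0_r. auto. }
  rewrite !inv_sq_eq by lia.
  pose proof (INR_ge_1 k ltac:(lia)). pose proof (INR_ge_1 (n - k) ltac:(lia)).
  replace (INR n) with (INR k + INR (n - k)) by (rewrite minus_INR by lia; ring).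
  set (x := INR k) in *. set (y := INR (n - k)) in *.
  split; [apply (Rmult_le_reg_r (x * x * y * y * (x + y) * (x + y)))
         |apply (Rmult_le_reg_r (x * x * y * y * (x + y)))];
    try (repeat apply Rmult_lt_0_compat; lra);
    field_simplify; try lra; pose proof (Rle_0_sqr (x - y)); unfold Rsqr in *; nra.
Qed.

Lemma sum_inv_sq_sym_le c n : 0 <= c ->
  sum_f_R0 (fun k => c * (inv_sq k + inv_sq (n - k))) n <= 4 * c.
Proof.
  intros Hc.
  rewrite (sum_eq _ (fun k => (inv_sq k + inv_sq (n - k)) * c)) by (intros; ring).
  rewrite <- scal_sum, sum_plus, sum_f_R0_skip.
  pose proof (sum_inv_sq_le_2 n). nra.
Qed.

Lemma conv_inv_sq_le n :
  PS_mult inv_sq inv_sq n <= 8 * inv_sq n /\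
  PS_mult (fun k => INR k * inv_sq k) inv_sq n <= 8 * INR n * inv_sq n.
Proof.
  pose proof (inv_sq_nonneg n). pose proof (pos_INR n). unfold PS_mult. split.
  - apply Rle_trans with (sum_f_R0 (fun k => 2 * inv_sq n * (inv_sq k + inv_sq (n - k))) n).
    + apply sum_Rle. intros k Hk. apply (inv_sq_mul_le n k Hk).
    + pose proof (sum_inv_sq_sym_le (2 * inv_sq n) n ltac:(lra)). lra.
  - apply Rle_trans with
      (sum_f_R0 (fun k => 2 * INR n * inv_sq n * (inv_sq k + inv_sq (n - k))) n).
    + apply sum_Rle. intros k Hk. apply (inv_sq_mul_le n k Hk).
    + assert (0 <= 2 * INR n * inv_sq n) by (repeat apply Rmult_le_pos; lra).
      pose proof (sum_inv_sq_sym_le (2 * INR n * inv_sq n) n ltac:(lra)). lra.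
Qed.

Lemma PS_mult_ext (a b a' b' : nat -> R) n :
  (forall k, (k <= n)%nat -> a k * b (n - k)%nat = a' k * b' (n - k)%nat) ->
  PS_mult a b n = PS_mult a' b' n.
Proof. intros H. apply sum_eq. auto. Qed.

Lemma PS_mult_abs_le (a b A B : nat -> R) n :
  (forall k, Rabs (a k) <= A k) -> (forall k, Rabs (b k) <= B k) ->
  Rabs (PS_mult a b n) <= PS_mult A B n.
Proof.
  intros Ha Hb. eapply Rle_trans; [apply sum_f_R0_triangle|].
  apply sum_Rle. intros k _. rewrite Rabs_mult.
  apply Rmult_le_compat; try apply Rabs_pos; auto.
Qed.

Lemma PS_mult_geom (c d q : R) (x y : nat -> R) n :
  PS_mult (fun k => c * q ^ k * x k) (fun k => d * q ^ k * y k) n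
  = c * d * q ^ n * PS_mult x y n.
Proof.
  unfold PS_mult. rewrite scal_sum. apply sum_eq. intros k Hk.
  replace (q ^ n) with (q ^ k * q ^ (n - k)) by (rewrite <- pow_add; f_equal; lia).
  ring.
Qed.

Lemma conv3_inv_sq_le n : PS_mult inv_sq (PS_mult inv_sq inv_sq) n <= 64 * inv_sq n.
Proof.
  apply Rle_trans with (8 * PS_mult inv_sq inv_sq n).
  - unfold PS_mult at 1 3. rewrite scal_sum. apply sum_Rle. intros k _.
    pose proof (proj1 (conv_inv_sq_le (n - k))). pose proof (inv_sq_nonneg k). nra.
  - pose proof (proj1 (conv_inv_sq_le n)). lra.
Qed.

Lemma sqrt3_sq : sqrt 3 * sqrt 3 = 3.
Proof. apply sqrt_sqrt. lra. Qed.

Lemma sqrt3_bounds : 17 / 10 < sqrt 3 < 7 / 4.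
Proof. pose proof sqrt3_sq. pose proof (sqrt_pos 3). nra. Qed.

(* The value h(0) of h = g(x)/x: the positive root of 2 a^2 - 2 a - 1 = 0. *)
Definition a0 : R := (1 + sqrt 3) / 2.

Lemma a0_bounds : 135 / 100 < a0 < 1375 / 1000.
Proof. unfold a0. pose proof sqrt3_bounds. lra. Qed.

(* h^2 (h + 1) = p0 + p1 W + p2 W^2 + W^3 for h = a0 + W. *)
Definition p0 : R := a0 * a0 * (1 + a0).
Definition p1 : R := 3 * a0 * a0 + 2 * a0.
Definition p2 : R := 1 + 3 * a0.

Definition unit_seq (m : nat) : R := if Nat.eqb m 0 then 1 else 0.

Definition xderiv (s : nat -> R) (k : nat) : R := INR k * s k.

Definition quad_part (s : nat -> R) (n : nat) : R :=
  2 * PS_mult s s n + 2 * PS_mult (xderiv s) s n.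

Definition cubic_part (s : nat -> R) (m : nat) : R :=
  p0 * unit_seq m + p1 * s m + p2 * PS_mult s s m + PS_mult s (PS_mult s s) m.

Definition shift2 (c : nat -> R) (n : nat) : R :=
  match n with S (S m) => c m | _ => 0 end.

(* Coefficient n of the equation for W reads
     (n + 2) sqrt 3 W_n + quad_part W n = shift2 (cubic_part W) n;
   since W_0 = 0, the right-hand side and quad_part W n only involve W_0 .. W_(n-1). *)
Definition next_coef (n : nat) (s : nat -> R) : R :=
  (shift2 (cubic_part s) n - quad_part s n) / ((INR n + 2) * sqrt 3).

Fixpoint coef_prefix (n : nat) : nat -> R :=
  match n with
  | O => fun _ => 0
  | S n' => fun k =>
      if (k <? n')%nat then coef_prefix n' k
      else if (k =? n')%nat then next_coef n' (coef_prefix n') else 0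
  end.

Definition sol_coef (n : nat) : R := next_coef n (coef_prefix n).

Lemma coef_prefix_spec n k : coef_prefix n k = if (k <? n)%nat then sol_coef k else 0.
Proof.
  revert k; induction n as [|n IH]; intros k; simpl; [now destruct (k <? 0)%nat|].
  rewrite IH.
  destruct (Nat.ltb_spec k n), (Nat.ltb_spec k (S n)), (Nat.eqb_spec k n);
    subst; try lia; reflexivity.
Qed.

Lemma sol_coef_0 : sol_coef 0 = 0.
Proof.
  unfold sol_coef, next_coef, quad_part, PS_mult, xderiv; simpl.
  pose proof sqrt3_bounds. field. lra.
Qed.

Lemma coef_prefix_0 n : coef_prefix n 0 = 0.
Proof. rewrite coef_prefix_spec. destruct (0 <? n)%nat; [apply sol_coef_0 | reflexivity]. Qed.

Lemma coef_prefix_lt n k : (k < n)%nat -> coef_prefix n k = sol_coef k.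
Proof. intros Hk. rewrite coef_prefix_spec. destruct (Nat.ltb_spec k n); [reflexivity | lia]. Qed.

Lemma quad_part_prefix n : quad_part (coef_prefix n) n = quad_part sol_coef n.
Proof.
  assert (Hterm : forall k, (k <= n)%nat ->
    coef_prefix n k * coef_prefix n (n - k) = sol_coef k * sol_coef (n - k) /\
    INR k * coef_prefix n k * coef_prefix n (n - k)
    = INR k * sol_coef k * sol_coef (n - k)).
  { intros k Hk.
    destruct (Nat.eq_dec k 0) as [->|Hk0].
    { rewrite coef_prefix_0, sol_coef_0. split; ring. }
    destruct (Nat.eq_dec k n) as [->|Hkn].
    { rewrite Nat.sub_diag, coef_prefix_0, sol_coef_0. split; ring. }
    rewrite !coef_prefix_lt by lia. split; reflexivity. }
  unfold quad_part, xderiv. f_equal; f_equal; apply PS_mult_ext; apply Hterm.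
Qed.

Lemma cubic_part_ext (s s' : nat -> R) m :
  (forall j, (j <= m)%nat -> s j = s' j) -> cubic_part s m = cubic_part s' m.
Proof.
  intros H.
  assert (Hsq : forall j, (j <= m)%nat -> PS_mult s s j = PS_mult s' s' j).
  { intros j Hj. apply PS_mult_ext. intros k Hk. rewrite !H by lia. reflexivity. }
  unfold cubic_part. rewrite H, Hsq by lia. f_equal.
  apply PS_mult_ext. intros k Hk. rewrite H, Hsq by lia. reflexivity.
Qed.

Lemma sol_coef_rec n :
  (INR n + 2) * sqrt 3 * sol_coef n + quad_part sol_coef n = shift2 (cubic_part sol_coef) n.
Proof.
  assert (HR : shift2 (cubic_part (coef_prefix n)) n = shift2 (cubic_part sol_coef) n).
  { destruct n as [|[|m]]; [reflexivity | reflexivity | unfold shift2].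
    apply cubic_part_ext. intros j Hj. apply coef_prefix_lt. lia. }
  unfold sol_coef at 1, next_coef. rewrite quad_part_prefix, HR.
  pose proof sqrt3_bounds. pose proof (pos_INR n). field. nra.
Qed.

(* The majorant of the coefficients: the factor 1 / n^2 absorbs the loss of
   the factor n in the term x W' W of the equation. *)
Definition beta (n : nat) : R := / 20 * 11 ^ n * inv_sq n.

Lemma beta_nonneg n : 0 <= beta n.
Proof.
  unfold beta. pose proof (inv_sq_nonneg n). pose proof (pow_le 11 n ltac:(lra)).
  apply Rmult_le_pos; [lra | auto].
Qed.

Lemma conv_beta_le n :
  PS_mult beta beta n <= / 50 * 11 ^ n * inv_sq n /\
  PS_mult (xderiv beta) beta n <= / 50 * 11 ^ n * INR n * inv_sq n.
Proof.
  pose proof (pow_le 11 n ltac:(lra)). destruct (conv_inv_sq_le n) as [H1 H2].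
  unfold beta, xderiv. split.
  - rewrite PS_mult_geom. nra.
  - rewrite (PS_mult_ext _ _ (fun k => / 20 * 11 ^ k * (INR k * inv_sq k))
      (fun k => / 20 * 11 ^ k * inv_sq k)) by (intros; ring).
    rewrite PS_mult_geom. nra.
Qed.

Lemma conv3_beta_le n : PS_mult beta (PS_mult beta beta) n <= / 125 * 11 ^ n * inv_sq n.
Proof.
  pose proof (pow_le 11 n ltac:(lra)). pose proof (conv3_inv_sq_le n).
  rewrite (PS_mult_ext _ _ beta (fun j => (/ 20 * / 20) * 11 ^ j * PS_mult inv_sq inv_sq j))
    by (intros k Hk; unfold beta at 2 3; rewrite PS_mult_geom; reflexivity).
  unfold beta. rewrite PS_mult_geom. nra.
Qed.

Lemma p_bounds : 0 <= p0 <= 9 / 2 /\ 0 <= p1 / 20 + p2 / 50 + / 125 <= 6 / 10.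
Proof. pose proof a0_bounds. unfold p0, p1, p2. split; split; nra. Qed.

Section CoefficientBounds.

Variable s : nat -> R.
Hypothesis s_le_beta : forall k, Rabs (s k) <= beta k.

Lemma quad_part_bound n :
  Rabs (quad_part s n) <= / 25 * 11 ^ n * inv_sq n * (1 + INR n).
Proof.
  unfold quad_part.
  assert (H1 : Rabs (PS_mult s s n) <= PS_mult beta beta n) by (apply PS_mult_abs_le; auto).
  assert (H2 : Rabs (PS_mult (xderiv s) s n) <= PS_mult (xderiv beta) beta n).
  { apply PS_mult_abs_le; auto. intros k. unfold xderiv.
    rewrite Rabs_mult, Rabs_right by (apply Rle_ge, pos_INR).
    apply Rmult_le_compat_l; [apply pos_INR | auto]. }
  destruct (conv_beta_le n).
  eapply Rle_trans; [apply Rabs_triang|]. rewrite !Rabs_mult, !(Rabs_right 2) by lra. lra.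
Qed.

Lemma cubic_part_bound m :
  Rabs (cubic_part s m)
  <= p0 * unit_seq m + (p1 / 20 + p2 / 50 + / 125) * 11 ^ m * inv_sq m.
Proof.
  unfold cubic_part.
  assert (H1 : Rabs (PS_mult s s m) <= PS_mult beta beta m) by (apply PS_mult_abs_le; auto).
  assert (H2 : Rabs (PS_mult s (PS_mult s s) m) <= PS_mult beta (PS_mult beta beta) m).
  { apply PS_mult_abs_le; auto. intros; apply PS_mult_abs_le; auto. }
  pose proof (proj1 (conv_beta_le m)). pose proof (conv3_beta_le m).
  pose proof (s_le_beta m). unfold beta in *. pose proof a0_bounds.
  assert (0 <= p1 /\ 0 <= p2) as [Hp1 Hp2] by (unfold p1, p2; nra).
  destruct p_bounds as [[Hp0 _] _].
  assert (0 <= unit_seq m) by (unfold unit_seq; destruct (m =? 0)%nat; lra).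
  eapply Rle_trans; [apply Rabs_triang|].
  eapply Rle_trans; [apply Rplus_le_compat_r, Rabs_triang|].
  eapply Rle_trans; [apply Rplus_le_compat_r, Rplus_le_compat_r, Rabs_triang|].
  rewrite !Rabs_mult, (Rabs_right p0), (Rabs_right p1), (Rabs_right p2),
    (Rabs_right (unit_seq m)) by lra.
  nra.
Qed.

End CoefficientBounds.

Lemma quad_majorant n :
  / 25 * 11 ^ n * inv_sq n * (1 + INR n) <= / 2 * beta n * ((INR n + 2) * sqrt 3).
Proof.
  unfold beta. pose proof sqrt3_bounds. pose proof (pos_INR n).
  assert (HX : 0 <= 11 ^ n * inv_sq n)
    by (apply Rmult_le_pos; [apply pow_le; lra | apply inv_sq_nonneg]).
  assert ((1 + INR n) / 25 <= (INR n + 2) * sqrt 3 / 40) by nra.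
  replace (/ 25 * 11 ^ n * inv_sq n * (1 + INR n))
    with (11 ^ n * inv_sq n * ((1 + INR n) / 25)) by (unfold Rdiv; ring).
  replace (/ 2 * (/ 20 * 11 ^ n * inv_sq n) * ((INR n + 2) * sqrt 3))
    with (11 ^ n * inv_sq n * ((INR n + 2) * sqrt 3 / 40)) by field.
  apply Rmult_le_compat_l; assumption.
Qed.

Lemma cubic_majorant m :
  p0 * unit_seq m + (p1 / 20 + p2 / 50 + / 125) * 11 ^ m * inv_sq m
  <= / 2 * beta (S (S m)) * ((INR (S (S m)) + 2) * sqrt 3).
Proof.
  pose proof sqrt3_bounds. destruct p_bounds as [[Hp0 Hp0'] [Hc Hc']].
  set (c := p1 / 20 + p2 / 50 + / 125) in *. clearbody c.
  unfold beta, unit_seq. rewrite <- !tech_pow_Rmult, (inv_sq_eq (S (S m))) by lia.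
  destruct m as [|m].
  - simpl. field_simplify. lra.
  - simpl Nat.eqb. rewrite inv_sq_eq, !S_INR by lia.
    pose proof (pow_lt 11 (S m) ltac:(lra)). set (P := 11 ^ S m) in *. clearbody P.
    pose proof (INR_ge_1 (S m) ltac:(lia)). rewrite S_INR in *.
    set (x := INR m + 1) in *. clearbody x.
    replace (p0 * 0 + c * P * / (x * x)) with (P * (c / (x * x))) by (field; lra).
    replace (/ 2 * (/ 20 * (11 * (11 * P)) * / ((x + 1 + 1) * (x + 1 + 1)))
             * ((x + 1 + 1 + 2) * sqrt 3))
      with (P * (121 / 40 * (x + 4) * sqrt 3 / ((x + 2) * (x + 2)))) by (field; lra).
    apply Rmult_le_compat_l; [lra|].
    apply (Rmult_le_reg_r (x * x * ((x + 2) * (x + 2)))); [nra|].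
    replace (c / (x * x) * (x * x * ((x + 2) * (x + 2)))) with (c * ((x + 2) * (x + 2)))
      by (field; lra).
    replace (121 / 40 * (x + 4) * sqrt 3 / ((x + 2) * (x + 2)) * (x * x * ((x + 2) * (x + 2))))
      with (121 / 40 * (x + 4) * sqrt 3 * (x * x)) by (field; lra).
    assert ((x + 2) * (x + 2) <= 9 * (x * x)) by nra.
    assert (121 / 40 * (x + 4) * sqrt 3 >= 6) by nra.
    nra.
Qed.

Lemma next_coef_bound n s : (forall k, Rabs (s k) <= beta k) -> Rabs (next_coef n s) <= beta n.
Proof.
  intros Hs. pose proof sqrt3_bounds. pose proof (pos_INR n).
  assert (Hden : 0 < (INR n + 2) * sqrt 3) by nra.
  assert (HR : Rabs (shift2 (cubic_part s) n) <= / 2 * beta n * ((INR n + 2) * sqrt 3)).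
  { destruct n as [|[|m]]; simpl shift2; rewrite ?Rabs_R0.
    1,2: apply Rmult_le_pos; [apply Rmult_le_pos; [lra | apply beta_nonneg] | lra].
    eapply Rle_trans; [apply cubic_part_bound, Hs | apply cubic_majorant]. }
  assert (HQ := Rle_trans _ _ _ (quad_part_bound s Hs n) (quad_majorant n)).
  unfold next_coef, Rdiv. rewrite Rabs_mult, Rabs_inv, (Rabs_right (_ * sqrt 3)) by lra.
  apply (Rmult_le_reg_r ((INR n + 2) * sqrt 3)); [lra|].
  rewrite Rmult_assoc, Rinv_l, Rmult_1_r by lra.
  eapply Rle_trans; [apply Rabs_triang|]. rewrite Rabs_Ropp. lra.
Qed.

Lemma sol_coef_bound n : Rabs (sol_coef n) <= beta n.
Proof.
  induction n as [n IH] using (well_founded_induction Wf_nat.lt_wf).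
  apply next_coef_bound. intros k. rewrite coef_prefix_spec.
  destruct (Nat.ltb_spec k n); [apply IH; auto|]. rewrite Rabs_R0. apply beta_nonneg.
Qed.

Lemma CV_radius_geom (a : nat -> R) C q : 0 < q ->
  (forall n, Rabs (a n) <= C * q ^ n) -> Rbar_le (/ q) (CV_radius a).
Proof.
  intros Hq Ha. apply (proj1 (CV_radius_bounded a)). exists C. intros n.
  assert (0 < q ^ n) by (apply pow_lt, Hq).
  rewrite Rabs_mult, <- RPow_abs, (Rabs_right (/ q)), pow_inv
    by (apply Rle_ge, Rlt_le, Rinv_0_lt_compat, Hq).
  apply (Rmult_le_reg_r (q ^ n)); auto.
  rewrite Rmult_assoc, Rinv_l, Rmult_1_r by lra. apply Ha.
Qed.

Lemma inside_radius_geom (a : nat -> R) C x :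
  (forall n, Rabs (a n) <= C * 11 ^ n) -> Rabs x < / 11 -> Rbar_lt (Rabs x) (CV_radius a).
Proof.
  intros Ha Hx. eapply Rbar_lt_le_trans; [|apply (CV_radius_geom a C 11); [lra | exact Ha]].
  exact Hx.
Qed.

Lemma beta_le_geom n : beta n <= / 20 * 11 ^ n /\ INR n * beta n <= / 20 * 11 ^ n.
Proof.
  unfold beta. pose proof (inv_sq_le_1 n). pose proof (INR_inv_sq_le_1 n).
  pose proof (pow_le 11 n ltac:(lra)). split; nra.
Qed.

Lemma sol_coef_geom n :
  Rabs (sol_coef n) <= / 20 * 11 ^ n /\ Rabs (xderiv sol_coef n) <= / 20 * 11 ^ n.
Proof.
  pose proof (sol_coef_bound n). destruct (beta_le_geom n). split; [lra|].
  unfold xderiv. rewrite Rabs_mult, Rabs_right by (apply Rle_ge, pos_INR).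
  pose proof (pos_INR n). nra.
Qed.

Lemma conv_sol_coef_geom n : Rabs (PS_mult sol_coef sol_coef n) <= / 50 * 11 ^ n.
Proof.
  eapply Rle_trans; [apply PS_mult_abs_le; apply sol_coef_bound|].
  eapply Rle_trans; [apply conv_beta_le|].
  pose proof (inv_sq_le_1 n). pose proof (inv_sq_nonneg n).
  pose proof (pow_le 11 n ltac:(lra)). nra.
Qed.

Lemma unit_seq_geom n : Rabs (unit_seq n) <= 1 * 11 ^ n.
Proof.
  pose proof (pow_R1_Rle 11 n ltac:(lra)).
  unfold unit_seq. destruct (n =? 0)%nat; rewrite ?Rabs_R1, ?Rabs_R0; lra.
Qed.

Lemma is_pseries_ext_R (a b : nat -> R) x l :
  (forall n, a n = b n) -> is_pseries a x l -> is_pseries b x l.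
Proof. apply is_pseries_ext. Qed.

Lemma is_pseries_lin (a b : nat -> R) x la lb c d :
  is_pseries a x la -> is_pseries b x lb ->
  is_pseries (fun n => c * a n + d * b n) x (c * la + d * lb).
Proof.
  intros Ha Hb.
  replace (c * la + d * lb) with (plus (scal c la) (scal d lb)) by reflexivity.
  apply (is_pseries_ext_R (PS_plus (PS_scal c a) (PS_scal d b))); [reflexivity|].
  exact (is_pseries_plus _ _ _ _ _ (is_pseries_scal c a x la (Rmult_comm _ _) Ha)
           (is_pseries_scal d b x lb (Rmult_comm _ _) Hb)).
Qed.

Section SolutionSeries.

Variable x : R.
Hypothesis x_small : Rabs x < / 11.

Local Notation W := (PSeries sol_coef x).
Local Notation V := (PSeries (xderiv sol_coef) x).

Lemma is_pseries_unit_seq : is_pseries unit_seq x 1.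
Proof.
  assert (Hex : ex_pseries unit_seq x)
    by (apply CV_radius_inside, (inside_radius_geom _ 1); auto; apply unit_seq_geom).
  replace 1 with (PSeries unit_seq x); [apply PSeries_correct, Hex|].
  rewrite PSeries_decr_1, (PSeries_ext _ (fun _ => 0)), PSeries_const_0 by auto.
  unfold unit_seq; simpl. ring.
Qed.

Lemma pseries_sol_coef :
  is_pseries sol_coef x W /\ is_pseries (xderiv sol_coef) x V /\
  is_pseries (PS_mult sol_coef sol_coef) x (W * W) /\
  is_pseries (PS_mult (xderiv sol_coef) sol_coef) x (V * W) /\
  is_pseries (PS_mult sol_coef (PS_mult sol_coef sol_coef)) x (W * (W * W)).
Proof.
  assert (I1 : Rbar_lt (Rabs x) (CV_radius sol_coef))
    by (apply (inside_radius_geom _ (/ 20)); auto; apply sol_coef_geom).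
  assert (I2 : Rbar_lt (Rabs x) (CV_radius (xderiv sol_coef)))
    by (apply (inside_radius_geom _ (/ 20)); auto; apply sol_coef_geom).
  assert (I3 : Rbar_lt (Rabs x) (CV_radius (PS_mult sol_coef sol_coef)))
    by (apply (inside_radius_geom _ (/ 50)); auto; apply conv_sol_coef_geom).
  assert (H1 : is_pseries sol_coef x W) by (apply PSeries_correct, CV_radius_inside, I1).
  assert (H2 : is_pseries (xderiv sol_coef) x V) by (apply PSeries_correct, CV_radius_inside, I2).
  assert (H3 := is_pseries_mult _ _ _ _ _ H1 H1 I1 I1).
  repeat split; auto.
  - exact (is_pseries_mult _ _ _ _ _ H2 H1 I2 I1).
  - exact (is_pseries_mult _ _ _ _ _ H1 H3 I1 I3).
Qed.

(* [sol_coef_rec] summed against x^n. *)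
Lemma sol_series_eq :
  2 * sqrt 3 * W + sqrt 3 * V + 2 * (W * W) + 2 * (V * W)
  = x ^ 2 * (p0 + p1 * W + p2 * (W * W) + W * (W * W)).
Proof.
  destruct pseries_sol_coef as (HW & HV & HWW & HVW & HWWW).
  assert (HL := is_pseries_lin _ _ _ _ _ 1 2
                  (is_pseries_lin _ _ _ _ _ 1 2
                     (is_pseries_lin _ _ _ _ _ (2 * sqrt 3) (sqrt 3) HW HV) HWW) HVW).
  assert (HR := is_pseries_incr_n _ 2 _ _
                  (is_pseries_lin _ _ _ _ _ 1 1
                     (is_pseries_lin _ _ _ _ _ 1 p2
                        (is_pseries_lin _ _ _ _ _ p0 p1 is_pseries_unit_seq HW) HWW) HWWW)).
  apply is_pseries_unique in HL.
  apply (is_pseries_ext_R _ (fun n => 1 * (1 * (2 * sqrt 3 * sol_coef n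
           + sqrt 3 * xderiv sol_coef n) + 2 * PS_mult sol_coef sol_coef n)
           + 2 * PS_mult (xderiv sol_coef) sol_coef n)) in HR.
  - apply is_pseries_unique in HR. rewrite HL in HR.
    change (scal (pow_n x 2) ?l) with (x ^ 2 * l) in HR.
    etransitivity; [| etransitivity; [exact HR |]]; ring.
  - intros n. transitivity (shift2 (cubic_part sol_coef) n).
    + destruct n as [|[|m]]; [reflexivity | reflexivity | simpl; unfold cubic_part; ring].
    + rewrite <- sol_coef_rec. unfold quad_part, xderiv. ring.
Qed.

(* With h = a0 + W and x h' = V, this is g'(2g - x) = (1 + g^2)(g + x) for g = x h. *)
Lemma sol_ode :
  (a0 + W + V) * (2 * (x * (a0 + W)) - x)
  = (1 + x * (a0 + W) * (x * (a0 + W))) * (x * (a0 + W) + x).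
Proof.
  pose proof sol_series_eq as H. pose proof sqrt3_sq as H3.
  set (w := W) in *. set (v := V) in *. clearbody w v. apply Rminus_diag_uniq.
  transitivity (x * ((sqrt 3 * sqrt 3 - 3) / 2
    + ((2 * sqrt 3 * w + sqrt 3 * v + 2 * (w * w) + 2 * (v * w))
       - x ^ 2 * (p0 + p1 * w + p2 * (w * w) + w * (w * w))))).
  - unfold p0, p1, p2, a0. field.
  - rewrite H3, H. field.
Qed.

End SolutionSeries.

(* Coefficients of h = a0 + W and of the slope g = x h of the profile. *)
Definition h_coef (k : nat) : R := a0 * unit_seq k + sol_coef k.
Definition g_coef (n : nat) : R := match n with O => 0 | S k => h_coef k end.
Definition profile : R -> R := PSeries (PS_Int g_coef).

Lemma g_coef_geom n : Rabs (g_coef n) <= 2 * 11 ^ n.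
Proof.
  pose proof a0_bounds. pose proof (pow_R1_Rle 11 n ltac:(lra)).
  destruct n as [|k]; simpl g_coef; [rewrite Rabs_R0; lra|].
  pose proof (proj1 (sol_coef_geom k)). pose proof (unit_seq_geom k).
  pose proof (pow_R1_Rle 11 k ltac:(lra)). rewrite <- tech_pow_Rmult.
  unfold h_coef. eapply Rle_trans; [apply Rabs_triang|].
  rewrite Rabs_mult, (Rabs_right a0) by lra. nra.
Qed.

Section Profile.

Variable y : R.
Hypothesis y_small : Rabs y < / 11.

Lemma inside_g_coef : Rbar_lt (Rabs y) (CV_radius g_coef).
Proof. exact (inside_radius_geom _ 2 y g_coef_geom y_small). Qed.

Lemma g_series_val : PSeries g_coef y = y * (a0 + PSeries sol_coef y).
Proof.
  rewrite (PSeries_ext g_coef (PS_incr_1 h_coef)) by (intros [|n]; reflexivity).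
  rewrite PSeries_incr_1. f_equal.
  apply is_pseries_unique.
  apply (is_pseries_ext_R (fun n => a0 * unit_seq n + 1 * sol_coef n));
    [intros n; unfold h_coef; ring|].
  replace (a0 + PSeries sol_coef y) with (a0 * 1 + 1 * PSeries sol_coef y) by ring.
  apply is_pseries_lin; [apply is_pseries_unit_seq, y_small|].
  apply (proj1 (pseries_sol_coef y y_small)).
Qed.

Lemma g_series_derive :
  is_derive (PSeries g_coef) y (a0 + PSeries sol_coef y + PSeries (xderiv sol_coef) y).
Proof.
  destruct (pseries_sol_coef y y_small) as (HW & HV & _).
  replace (a0 + PSeries sol_coef y + PSeries (xderiv sol_coef) y)
    with (PSeries (PS_derive g_coef) y); [apply is_derive_PSeries, inside_g_coef|].
  apply is_pseries_unique.
  apply (is_pseries_ext_R (fun n => 1 * (a0 * unit_seq n + 1 * sol_coef n)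
                                  + 1 * xderiv sol_coef n)).
  - intros n. unfold PS_derive, g_coef, h_coef, xderiv, unit_seq.
    destruct n as [|n]; simpl Nat.eqb; [simpl; rewrite sol_coef_0|rewrite !S_INR]; ring.
  - replace (a0 + PSeries sol_coef y + PSeries (xderiv sol_coef) y)
      with (1 * (a0 * 1 + 1 * PSeries sol_coef y) + 1 * PSeries (xderiv sol_coef) y) by ring.
    apply is_pseries_lin; auto. apply is_pseries_lin; auto. apply is_pseries_unit_seq, y_small.
Qed.

Lemma profile_derive : is_derive profile y (PSeries g_coef y).
Proof.
  assert (I : Rbar_lt (Rabs y) (CV_radius (PS_Int g_coef)))
    by (rewrite CV_radius_Int; apply inside_g_coef).
  assert (H := is_derive_PSeries _ _ I).
  rewrite (PSeries_ext _ g_coef) in H; auto.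
  intros n. unfold PS_derive, PS_Int. pose proof (lt_0_INR (S n) ltac:(lia)). field. lra.
Qed.

End Profile.

Lemma small_nbhd y : Rabs y < / 11 -> locally y (fun z => Rabs z < / 11).
Proof.
  intros Hy. apply Rabs_def2 in Hy.
  apply (filter_imp (fun z => - / 11 < z /\ z < / 11)).
  - intros z Hz. apply Rabs_def1; tauto.
  - exact (open_and _ _ (open_gt (- / 11)) (open_lt (/ 11)) y ltac:(split; lra)).
Qed.

Lemma profile_slope y : Rabs y < / 11 ->
  locally y (fun z => Derive profile z = PSeries g_coef z).
Proof.
  intros Hy. apply (filter_imp _ _ (fun z Hz => is_derive_unique _ _ _ (profile_derive z Hz))).
  apply small_nbhd, Hy.
Qed.

Lemma profile_slope_derive y : Rabs y < / 11 ->
  is_derive (Derive profile) y (a0 + PSeries sol_coef y + PSeries (xderiv sol_coef) y).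
Proof.
  intros Hy. apply (is_derive_ext_loc (PSeries g_coef)); [|apply g_series_derive, Hy].
  apply (filter_imp _ _ (fun z Hz => eq_sym Hz) (profile_slope y Hy)).
Qed.

Lemma profile_smooth : smooth_on profile (- / 11) (/ 11).
Proof.
  intros n y Hy. assert (Hy' : Rabs y < / 11) by (apply Rabs_def1; lra).
  assert (I : forall z, Rabs z < / 11 -> Rbar_lt (Rabs z) (CV_radius (PS_Int g_coef)))
    by (intros z Hz; rewrite CV_radius_Int; apply inside_g_coef, Hz).
  apply (ex_derive_ext_loc (PSeries (PS_derive_n n (PS_Int g_coef)))).
  - apply (filter_imp _ _ (fun z Hz => eq_sym (Derive_n_PSeries n _ z (I z Hz)))).
    apply small_nbhd, Hy'.
  - eexists. apply is_derive_PSeries. rewrite CV_radius_derive_n. apply I, Hy'.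
Qed.

Theorem theorem4p5 :
  exists (eps : R) (f : R -> R),
    0 < eps /\
    smooth_on f (- eps) eps /\
    Derive f 0 = 0 /\
    (forall x t : R, 0 < x < eps ->
       sect_curv (rot_surface f) dz_field x t = 1 / 2).
Proof.
  assert (Hr : 0 < / 11) by (apply Rinv_0_lt_compat; lra).
  assert (Hsmall : forall s, 0 < s < / 11 -> Rabs s < / 11)
    by (intros s Hs; rewrite Rabs_right; lra).
  exists (/ 11), profile. split; [exact Hr|]. split; [exact profile_smooth|]. split.
  - apply is_derive_unique.
    assert (H := profile_derive 0 ltac:(rewrite Rabs_R0; exact Hr)).
    rewrite PSeries_0 in H. exact H.
  - intros u t Hu. apply (sect_curv_rot_half profile (/ 11)); auto.
    + intros s Hs. eexists. apply profile_slope_derive, Hsmall, Hs.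
    + rewrite (is_derive_unique _ _ _ (profile_slope_derive u (Hsmall u Hu))),
        (is_derive_unique _ _ _ (profile_derive u (Hsmall u Hu))), g_series_val
        by apply Hsmall, Hu.
      apply sol_ode, Hsmall, Hu.
Qed.
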